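(* Let $S$ and $T$ be trees and give $E(S)\times E(T)$ the product partial order. Sending a shuffle $A$ of $S$ and $T$ to its set of edge labels gives a bijection between $Sh(S,T)$ and the set of subsets $A\subseteq E(S)\times E(T)$ satisfying: (1) the induced partial order on $A$ is treelike; (2) the set of maximal elements of $A$ is exactly $\mathrm{Leaves}(S)\times\mathrm{Leaves}(T)$; (3) $A$ is maximal under inclusion among subsets satisfying (1) and (2). Moreover, for a shuffle, the tree order on its edges coincides with the order induced from $E(S)\times E(T)$.
   Context: A tree is a finite connected graph without cycles whose external edges are open (attached to only one vertex). One external edge is designated the root; the other external edges are the leaves. Each vertex has exactly one outgoing edge (towards the root) and a strictly positive number of incoming edges. Trees carry no planar structure. $E(T)$ denotes the set of edges of $T$, partially ordered by $e\le e'$ iff $e$ lies on the path from $e'$ to the root; $r_T$ denotes the root edge. For a non-leaf edge $e$, the edges immediately above $e$ are the incoming edges of the vertex whose outgoing edge is $e$. A partial order is treelike if it is finite, has a smallest element, and for each element $e$ the set $\{d: d\le e\}$ is linearly ordered (this is exactly the edge order of a tree). Shuffle: for trees $S,T$, a shuffle of $S$ and $T$ is a tree $A$ with a labelling of each edge by a pair $(s,t)\in E(S)\times E(T)$ such that: (1) the root of $A$ is labelled $(r_S,r_T)$; (2) the labelling restricts to a bijection from the leaves of $A$ onto $\mathrm{Leaves}(S)\times \mathrm{Leaves}(T)$; (3) if an edge of $A$ labelled $(s,t)$ is not a leaf of $A$, then the incoming edges of the vertex of $A$ directly above it are labelled either exactly $(s_1,t),\dots,(s_m,t)$, one for each edge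 $s_i$ immediately above $s$ in $S$, or exactly $(s,t_1),\dots,(s,t_n)$, one for each edge $t_j$ immediately above $t$ in $T$. Shuffles are taken up to isomorphism of labelled trees; $Sh(S,T)$ is the set of shuffles. *)

From mathcomp Require Import all_boot.
Set Implicit Arguments. Unset Strict Implicit. Unset Printing Implicit Defensive.

Definition treelike_on (E : finType) (D : {set E}) (le : rel E) : Prop :=
  [/\ (forall x, x \in D -> le x x),
      (forall x y, x \in D -> y \in D -> le x y -> le y x -> x = y),
      (forall x y z, x \in D -> y \in D -> z \in D -> le x y -> le y z -> le x z),
      (exists2 r, r \in D & forall x, x \in D -> le r x)
    & (forall e d1 d2, e \in D -> d1 \in D -> d2 \in D ->
         le d1 e -> le d2 e -> le d1 d2 || le d2 d1)].

Definition treelike (E : finType) (le : rel E) : Prop := treelike_on [set: E] le.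

(* A tree, represented by its (finite) set of edges with the edge order
   e <= e' iff e lies on the path from e' to the root.  Since vertices have
   at least one incoming edge, a tree is the same as a finite treelike poset. *)
Record tree := Tree {
  tedge : finType;
  tle : rel tedge;
  tle_treelike : treelike tle }.

Definition maximal_in (E : finType) (D : {set E}) (le : rel E) (x : E) : Prop :=
  x \in D /\ (forall y, y \in D -> le x y -> y = x).

Definition is_root (X : tree) (r : tedge X) : Prop := forall x, tle r x.

(* leaves: the maximal edges (equivalently, the non-root external edges,
   or the unique edge of the trivial tree) *)
Definition is_leaf (X : tree) (e : tedge X) : Prop :=
  maximal_in [set: tedge X] (@tle X) e.

Definition imm_above (X : tree) (e d : tedge X) : Prop :=
  [/\ d != e, tle e d & forall c, tle e c -> tle c d -> c = e \/ c = d].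

Definition prod_le (S T : tree) : rel (tedge S * tedge T) :=
  fun p q => tle p.1 q.1 && tle p.2 q.2.

Definition is_shuffle (S T : tree) (A : tree) (l : tedge A -> tedge S * tedge T)
  : Prop :=
  [/\
      (forall a, is_root a -> is_root (l a).1 /\ is_root (l a).2),
      (forall a, is_leaf a -> is_leaf (l a).1 /\ is_leaf (l a).2),
      (forall a b, is_leaf a -> is_leaf b -> l a = l b -> a = b),
      (forall s t, is_leaf s -> is_leaf t -> exists2 a, is_leaf a & l a = (s, t))
    &
      (forall a, ~ is_leaf a ->
         (forall c1 c2, imm_above a c1 -> imm_above a c2 -> l c1 = l c2 -> c1 = c2) /\
         (((forall c, imm_above a c -> (l c).2 = (l a).2 /\ imm_above (l a).1 (l c).1) /\
           (forall s', imm_above (l a).1 s' ->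
              exists2 c, imm_above a c & l c = (s', (l a).2)))
          \/
          ((forall c, imm_above a c -> (l c).1 = (l a).1 /\ imm_above (l a).2 (l c).2) /\
           (forall t', imm_above (l a).2 t' ->
              exists2 c, imm_above a c & l c = ((l a).1, t')))))].

Definition shuffle_iso (S T : tree) (A : tree) (l : tedge A -> tedge S * tedge T)
  (B : tree) (m : tedge B -> tedge S * tedge T) : Prop :=
  exists f : tedge A -> tedge B,
    [/\ bijective f, (forall x y, tle (f x) (f y) = tle x y) & (forall x, m (f x) = l x)].

Definition label_set (S T : tree) (A : tree) (l : tedge A -> tedge S * tedge T)
  : {set tedge S * tedge T} := [set l a | a : tedge A].

Definition shuffle_pre (S T : tree) (X : {set tedge S * tedge T}) : Prop :=
  treelike_on X (@prod_le S T) /\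
  (forall p, maximal_in X (@prod_le S T) p <-> (is_leaf p.1 /\ is_leaf p.2)).

Definition shuffle_subset (S T : tree) (X : {set tedge S * tedge T}) : Prop :=
  shuffle_pre X /\ (forall Y : {set tedge S * tedge T}, X \subset Y -> shuffle_pre Y -> Y = X).

From mathcomp Require Import all_boot.
Set Implicit Arguments. Unset Strict Implicit. Unset Printing Implicit Defensive.

(* Along each edge of a shuffle exactly one coordinate of the label takes an
   immediate step, and all children of a vertex step in the same coordinate;
   hence the labelling is an order embedding and the label set determines
   the shuffle.  No pair can be added to the label set: it would be squeezed
   between the labels of an edge and of one of its children.
   Conversely, let X be maximal.  Elements of X below a common pair are
   comparable, as a leaf pair of X lies above.  If c covers x in X, a pair
   strictly between them is kept out of X only by an element of X moved from
   x in one coordinate, and elements moved from x in different coordinates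
   are incomparable.  So the covers of x are immediate steps, all in one
   coordinate, and each such step occurs below a leaf pair above it; X with
   the induced order is thus a shuffle. *)

Definition porder (E : finType) (le : rel E) : Prop :=
  [/\ (forall x, le x x), (forall x y, le x y -> le y x -> x = y)
    & (forall x y z, le x y -> le y z -> le x z)].

Section FinitePoset.

Variables (E : finType) (le : rel E).
Hypothesis le_porder : porder le.

(* A maximal element is one maximising the size of its down-set. *)
Lemma ex_max (P : pred E) x : P x ->
  exists y, [/\ P y, le x y & forall z, P z -> le y z -> z = y].
Proof.
have [le_refl le_anti le_trans] := le_porder.
move=> Px; pose down y := [pred z | le z y].
have [|y /andP [Py le_xy] ymax] :=
  @arg_maxnP _ x [pred y | P y && le x y] (fun y => #|down y|).
  by rewrite /= Px le_refl.
exists y; split=> // z Pz le_yz; apply: le_anti => //.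
have sub_yz : down y \subset down z.
  by apply/subsetP => w; rewrite !inE => /le_trans; apply.
have /subsetP sub_zy : down z \subset down y.
  rewrite -(geq_leqif (subset_leqif_card sub_yz)); apply: ymax.
  by rewrite /= Pz (le_trans _ _ _ le_xy le_yz).
by apply: sub_zy; rewrite inE le_refl.
Qed.

End FinitePoset.

Lemma porder_dual (E : finType) (le : rel E) :
  porder le -> porder (fun x y => le y x).
Proof.
case=> le_refl le_anti le_trans; split=> // [x y le_yx le_xy|x y z le_yx le_zy].
  exact: le_anti.
exact: le_trans le_zy le_yx.
Qed.

Lemma ex_min (E : finType) (le : rel E) (P : pred E) x : porder le -> P x ->
  exists y, [/\ P y, le y x & forall z, P z -> le z y -> z = y].
Proof. by move/porder_dual/ex_max; apply. Qed.

Lemma ex_cover (E : finType) (le : rel E) (P : pred E) x y :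
  porder le -> P y -> le x y -> y != x ->
  exists c, [/\ P c, le x c, c != x, le c y &
     forall d, P d -> le x d -> le d c -> d = x \/ d = c].
Proof.
move=> le_porder Py le_xy neq_yx; have [le_refl _ le_trans] := le_porder.
pose between := [pred c | [&& P c, le x c, c != x & le c y]].
have [|c [/and4P [Pc le_xc neq_cx le_cy] _ cmin]] :=
  ex_min (P := between) le_porder (_ : between y).
  by rewrite /= Py le_xy neq_yx le_refl.
exists c; split=> // d Pd le_xd le_dc.
have [->|neq_dx] := eqVneq d x; [by left | right].
by apply: cmin => //; rewrite /= Pd le_xd neq_dx (le_trans _ _ _ le_dc le_cy).
Qed.

Section TreeOrder.

Variable X : tree.
Implicit Types x y s u v w : tedge X.

Lemma tree_porder : porder (@tle X).
Proof.
case: (tle_treelike X) => le_refl le_anti le_trans _ _; split=> [x|x y|x y z].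
- by apply: le_refl; rewrite in_setT.
- by apply: le_anti; rewrite in_setT.
- by apply: le_trans; rewrite in_setT.
Qed.

Lemma tle_refl x : tle x x.
Proof. by case: tree_porder. Qed.

Lemma tle_anti x y : tle x y -> tle y x -> x = y.
Proof. by case: tree_porder => _ + _; apply. Qed.

Lemma tle_trans x y z : tle x y -> tle y z -> tle x z.
Proof. by case: tree_porder => _ _; apply. Qed.

Lemma tle_total_below x y z : tle x z -> tle y z -> tle x y || tle y x.
Proof. by case: (tle_treelike X) => _ _ _ _; apply; rewrite in_setT. Qed.

Lemma tree_root : exists r : tedge X, is_root r.
Proof.
by case: (tle_treelike X) => _ _ _ [r _ r_min] _; exists r => x; rewrite r_min.
Qed.

Lemma is_leafP x : is_leaf x <-> (forall y, tle x y -> y = x).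
Proof.
split=> [[_ x_max] y | x_max]; first by apply: x_max; rewrite in_setT.
by split=> [|y _]; [rewrite in_setT | apply: x_max].
Qed.

Lemma leaf_above x : exists2 l, is_leaf l & tle x l.
Proof.
have [l [_ le_xl l_max]] := ex_max tree_porder (P := predT) (erefl : predT x).
by exists l => //; apply/is_leafP => y; apply: l_max.
Qed.

Lemma imm_above_exists x y : tle x y -> y != x ->
  exists2 u, imm_above x u & tle u y.
Proof.
move=> le_xy neq_yx.
have [u [_ le_xu neq_ux le_uy u_min]] :=
  ex_cover tree_porder (P := predT) (erefl : predT y) le_xy neq_yx.
by exists u => //; split=> // d; apply: u_min.
Qed.

Lemma imm_above_not_leaf x u : imm_above x u -> ~ is_leaf x.
Proof. by case=> /eqP neq_ux le_xu _ /is_leafP/(_ u le_xu). Qed.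

Lemma not_leaf_imm_above x : ~ is_leaf x -> exists u, imm_above x u.
Proof.
move=> x_nleaf.
have [/existsP [y /andP [le_xy neq_yx]] | /existsPn x_max] :=
  boolP [exists y, tle x y && (y != x)].
  by have [u xu _] := imm_above_exists le_xy neq_yx; exists u.
case: x_nleaf; apply/is_leafP => y le_xy; apply/eqP.
by move: (x_max y); rewrite le_xy negbK.
Qed.

Lemma imm_above_eq x u v w :
  imm_above x u -> imm_above x v -> tle u w -> tle v w -> u = v.
Proof.
move=> [neq_ux le_xu u_min] [neq_vx le_xv v_min] le_uw le_vw.
have [le_uv|le_vu] := orP (tle_total_below le_uw le_vw).
  by case: (v_min u le_xu le_uv) => // eq_ux; rewrite eq_ux eqxx in neq_ux.
by case: (u_min v le_xv le_vu) => // eq_vx; rewrite eq_vx eqxx in neq_vx.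
Qed.

End TreeOrder.

Section ProductOrder.

Variables S T : tree.
Implicit Types p q r x y c : tedge S * tedge T.

Lemma prod_le_refl p : prod_le p p.
Proof. by rewrite /prod_le !tle_refl. Qed.

Lemma prod_le_anti p q : prod_le p q -> prod_le q p -> p = q.
Proof.
case: p q => [s t] [s' t'] /andP [/= ? ?] /andP [/= ? ?].
by congr pair; apply: tle_anti.
Qed.

Lemma prod_le_trans p q r : prod_le p q -> prod_le q r -> prod_le p r.
Proof.
by move=> /andP [? ?] /andP [? ?]; rewrite /prod_le (tle_trans (y := q.1)) //
  (tle_trans (y := q.2)).
Qed.

Lemma prod_porder : porder (@prod_le S T).
Proof.
by split=> [p|p q|p q r];
  [exact: prod_le_refl | exact: prod_le_anti | exact: prod_le_trans].
Qed.

Definition left_step x c := c.2 = x.2 /\ imm_above x.1 c.1.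
Definition right_step x c := c.1 = x.1 /\ imm_above x.2 c.2.

Lemma step_between x c y : left_step x c \/ right_step x c ->
  prod_le x y -> prod_le y c -> y = x \/ y = c.
Proof.
case: x c y => [s t] [s' t'] [a b]; rewrite /left_step /right_step /=.
move=> step /andP [/= le_sa le_tb] /andP [/= le_as' le_bt'].
case: step => [[? [_ _ s'_min]] | [? [_ _ t'_min]]]; subst.
  have -> : b = t by apply: tle_anti.
  by case: (s'_min a le_sa le_as') => ->; [left | right].
have -> : a = s by apply: tle_anti.
by case: (t'_min b le_tb le_bt') => ->; [left | right].
Qed.

End ProductOrder.

Section ShuffleOrder.

Variables (S T A : tree) (l : tedge A -> tedge S * tedge T).
Hypothesis l_shuffle : is_shuffle l.

Lemma shuffle_child_step a c : imm_above a c ->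
  left_step (l a) (l c) \/ right_step (l a) (l c).
Proof.
move=> ac; case: l_shuffle => _ _ _ _ /(_ a (imm_above_not_leaf ac)).
by case=> _ [[step _] | [step _]]; [left | right]; apply: step.
Qed.

Lemma shuffle_child_lt a c : imm_above a c -> prod_le (l a) (l c) && (l c != l a).
Proof.
case/shuffle_child_step=> [[eq2 [neq1 le1 _]] | [eq1 [neq2 le2 _]]].
  by rewrite /prod_le le1 eq2 tle_refl; apply: contra neq1 => /eqP ->.
by rewrite /prod_le le2 eq1 tle_refl; apply: contra neq2 => /eqP ->.
Qed.

Lemma shuffle_le a b : tle a b -> prod_le (l a) (l b).
Proof.
move=> le_ab; pose P := [pred m | [&& tle a m, tle m b & prod_le (l a) (l m)]].
have [|m [/and3P [le_am le_mb lab_am] _ m_max]] := ex_max (tree_porder A) (_ : P a).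
  by rewrite /= tle_refl le_ab prod_le_refl.
have [->|neq_bm] := eqVneq b m; first exact: lab_am.
have [c mc le_cb] := imm_above_exists le_mb neq_bm.
have [_ le_mc _] := mc; have /andP [lab_mc _] := shuffle_child_lt mc.
suff eq_cm : c = m by case: mc => /eqP.
by apply: m_max; rewrite //= (tle_trans le_am le_mc) le_cb (prod_le_trans lab_am).
Qed.

Lemma shuffle_lt a b : tle a b -> b != a -> l b != l a.
Proof.
move=> le_ab neq_ba; have [c ac le_cb] := imm_above_exists le_ab neq_ba.
have /andP [lab_ac neq_ca] := shuffle_child_lt ac.
apply: contra neq_ca => /eqP eq_ba.
by apply/eqP/prod_le_anti; rewrite // -eq_ba shuffle_le.
Qed.

(* The greatest common lower bound [m] of [a] and [b] must be [a]: otherwise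
   the children of [m] towards [a] and [b] are distinct steps in the same
   coordinate whose labels lie below [l b], hence equal. *)
Lemma shuffle_le_inv a b : prod_le (l a) (l b) -> tle a b.
Proof.
move=> lab_ab; have [r r_root] := tree_root A.
pose P := [pred m | tle m a && tle m b].
have [|m [/andP [le_ma le_mb] _ m_max]] := ex_max (tree_porder A) (_ : P r).
  by rewrite /= !r_root.
have [->//|neq_am] := eqVneq a m.
have [eq_bm|neq_bm] := eqVneq b m.
  have [->|neq_ab] := eqVneq a b; first exact: tle_refl.
  move: le_ma; rewrite -eq_bm => le_ba.
  have := shuffle_lt le_ba neq_ab.
  by rewrite (prod_le_anti (shuffle_le le_ba) lab_ab) eqxx.
have [c mc le_ca] := imm_above_exists le_ma neq_am.
have [c' mc' le_c'b] := imm_above_exists le_mb neq_bm.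
have neq_cc' : c != c'.
  apply: contraNneq neq_am => eq_cc'; have [/eqP neq_cm le_mc _] := mc.
  by case: neq_cm; apply: m_max; rewrite //= le_ca eq_cc' le_c'b.
have /andP [lab_cb1 lab_cb2] := prod_le_trans (shuffle_le le_ca) lab_ab.
have /andP [lab_c'b1 lab_c'b2] := shuffle_le le_c'b.
case/negP: neq_cc'; apply/eqP.
case: l_shuffle => _ _ _ _ /(_ m (imm_above_not_leaf mc)) [l_inj steps].
apply: l_inj => //; rewrite [l c]surjective_pairing [l c']surjective_pairing.
case: steps => [[step _] | [step _]].
- have [-> mc1] := step c mc; have [-> mc'1] := step c' mc'.
  by rewrite (imm_above_eq mc1 mc'1 lab_cb1 lab_c'b1).
- have [-> mc2] := step c mc; have [-> mc'2] := step c' mc'.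
  by rewrite (imm_above_eq mc2 mc'2 lab_cb2 lab_c'b2).
Qed.

Lemma shuffle_leE a b : tle a b = prod_le (l a) (l b).
Proof. by apply/idP/idP; [apply: shuffle_le | apply: shuffle_le_inv]. Qed.

End ShuffleOrder.

Definition imm_above_in (S T : tree) (X : {set tedge S * tedge T}) x c :=
  [/\ c \in X, c != x, prod_le x c &
     forall d, d \in X -> prod_le x d -> prod_le d c -> d = x \/ d = c].

Section OrderEmbedding.

Variables (S T A : tree) (l : tedge A -> tedge S * tedge T).
Hypothesis l_mono : forall a b, tle a b = prod_le (l a) (l b).

Lemma label_inj : injective l.
Proof. by move=> a b eq_ab; apply: tle_anti; rewrite l_mono eq_ab prod_le_refl. Qed.

Lemma label_set_treelike : treelike_on (label_set l) (@prod_le S T).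
Proof.
split=> [p _|p q _ _|p q r _ _ _||].
- exact: prod_le_refl.
- exact: prod_le_anti.
- exact: prod_le_trans.
- have [r r_root] := tree_root A; exists (l r); first exact: imset_f.
  by move=> _ /imsetP [a _ ->]; rewrite -l_mono.
- move=> _ _ _ /imsetP [a _ ->] /imsetP [b _ ->] /imsetP [c _ ->].
  by rewrite -!l_mono; apply: tle_total_below.
Qed.

Lemma maximal_label_set a : maximal_in (label_set l) (@prod_le S T) (l a) <-> is_leaf a.
Proof.
split=> [[_ a_max] | /is_leafP a_max].
  by apply/is_leafP => b le_ab; apply: label_inj; apply: a_max; rewrite -?l_mono ?imset_f.
by split=> [|_ /imsetP [b _ ->]]; rewrite ?imset_f // -l_mono => /a_max ->.
Qed.

Lemma imm_above_label_set a c :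
  imm_above a c <-> imm_above_in (label_set l) (l a) (l c).
Proof.
split=> [[neq_ca le_ac c_min] | [_ neq_ca le_ac c_min]]; split.
- exact: imset_f.
- by rewrite (inj_eq label_inj).
- by rewrite -l_mono.
- move=> _ /imsetP [d _ ->]; rewrite -!l_mono => le_ad le_dc.
  by case: (c_min d le_ad le_dc) => ->; [left | right].
- by rewrite -(inj_eq label_inj).
- by rewrite l_mono.
- move=> d; rewrite !l_mono => le_ad le_dc.
  have ld : l d \in label_set l by exact: imset_f.
  by case: (c_min _ ld le_ad le_dc) => /label_inj ->; [left | right].
Qed.

End OrderEmbedding.

Lemma shuffle_iso_label_set (S T A B : tree) (l : tedge A -> tedge S * tedge T)
    (m : tedge B -> tedge S * tedge T) :
  shuffle_iso l m -> label_set l = label_set m.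
Proof.
case=> f [[g fK gK] _ mf]; apply/setP => p.
apply/imsetP/imsetP => [[a _ ->] | [b _ ->]]; first by exists (f a); rewrite ?mf.
by exists (g b); rewrite // -mf gK.
Qed.

Lemma label_set_shuffle_iso (S T A B : tree) (l : tedge A -> tedge S * tedge T)
    (m : tedge B -> tedge S * tedge T) :
  (forall a a', tle a a' = prod_le (l a) (l a')) ->
  (forall b b', tle b b' = prod_le (m b) (m b')) ->
  label_set l = label_set m -> shuffle_iso l m.
Proof.
move=> l_mono m_mono eq_lm.
have l_in_m a : l a \in codom m.
  have /imsetP [b _ ->] : l a \in label_set m by rewrite -eq_lm imset_f.
  exact: codom_f.
have m_in_l b : m b \in codom l.
  have /imsetP [a _ ->] : m b \in label_set l by rewrite eq_lm imset_f.
  exact: codom_f.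
pose f a := iinv (l_in_m a); pose g b := iinv (m_in_l b).
have mf a : m (f a) = l a by apply: f_iinv.
have lg b : l (g b) = m b by apply: f_iinv.
exists f; split=> // [|a a']; last by rewrite m_mono l_mono !mf.
by exists g => [a|b]; [apply: (label_inj l_mono) | apply: (label_inj m_mono)];
  rewrite ?lg ?mf.
Qed.

Section PreShuffle.

Variables (S T : tree) (X : {set tedge S * tedge T}).
Hypothesis X_pre : shuffle_pre X.
Implicit Types p q u x y z d e : tedge S * tedge T.

Lemma leaf_pair_in s t : is_leaf s -> is_leaf t -> (s, t) \in X.
Proof.
move=> s_leaf t_leaf; case: X_pre => _ /(_ (s, t)) [_ /(_ (conj s_leaf t_leaf))].
by case.
Qed.

(* A leaf pair above [u] lies in [X]. *)
Lemma pre_comparable p q u : p \in X -> q \in X -> prod_le p u -> prod_le q u ->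
  prod_le p q || prod_le q p.
Proof.
move=> p_in q_in le_pu le_qu.
have [s s_leaf le_us] := leaf_above u.1; have [t t_leaf le_ut] := leaf_above u.2.
have le_u : prod_le u (s, t) by rewrite /prod_le le_us le_ut.
case: X_pre => [[_ _ _ _ lin] _]; apply: (lin (s, t)) => //; first exact: leaf_pair_in.
  exact: prod_le_trans le_pu le_u.
exact: prod_le_trans le_qu le_u.
Qed.

Lemma pre_axis_moves x p q : p \in X -> q \in X -> p.2 = x.2 -> q.1 = x.1 ->
  tle x.1 p.1 -> tle x.2 q.2 -> p.1 = x.1 \/ q.2 = x.2.
Proof.
move=> p_in q_in eq_p2 eq_q1 le_p1 le_q2.
have le_p : prod_le p (p.1, q.2) by rewrite /prod_le tle_refl eq_p2 le_q2.
have le_q : prod_le q (p.1, q.2) by rewrite /prod_le tle_refl eq_q1 le_p1.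
case/orP: (pre_comparable p_in q_in le_p le_q) => /andP [le1 le2].
  by left; apply: tle_anti; rewrite // -eq_q1.
by right; apply: tle_anti; rewrite // -eq_p2.
Qed.

Lemma imm_above_in_exists x y : y \in X -> prod_le x y -> y != x ->
  exists2 c, imm_above_in X x c & prod_le c y.
Proof.
move=> y_in le_xy neq_yx.
have [c [c_in le_xc neq_cx le_cy c_min]] :=
  ex_cover (prod_porder S T) (P := mem X) y_in le_xy neq_yx.
by exists c.
Qed.

Lemma pre_setU1 z y : y \in X -> prod_le z y ->
  (forall d e, d \in X -> e \in X -> prod_le z e -> prod_le d e ->
     prod_le d z || prod_le z d) ->
  shuffle_pre (z |: X).
Proof.
move=> y_in le_zy z_cmp; case: X_pre => [[_ _ _ [r r_in r_min] lin] leaves].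
have cmp_z d e : d \in X -> e \in z |: X -> prod_le z e -> prod_le d e ->
    prod_le d z || prod_le z d.
  by move=> d_in /setU1P [->|e_in] le_ze le_de; [rewrite le_de | exact: z_cmp le_ze le_de].
have up_X e : e \in z |: X -> exists2 w, w \in X & prod_le e w.
  by case/setU1P => [->|e_in]; [exists y | exists e; rewrite ?prod_le_refl].
split; first split=> [p _|p q _ _|p q w _ _ _||].
- exact: prod_le_refl.
- exact: prod_le_anti.
- exact: prod_le_trans.
- have [le_rz|le_zr] := orP (z_cmp r y r_in y_in le_zy (r_min y y_in)).
    exists r => [|p /setU1P [->//|]]; [exact: setU1r | exact: r_min].
  exists z => [|p /setU1P [->|p_in]]; rewrite ?setU11 ?prod_le_refl //.
  exact: prod_le_trans le_zr (r_min p p_in).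
- move=> e d1 d2 e_in /setU1P [->|d1_in] /setU1P [->|d2_in] le1 le2.
  + by rewrite prod_le_refl.
  + by rewrite orbC; apply: cmp_z d2_in e_in le1 le2.
  + exact: cmp_z d1_in e_in le2 le1.
  + have [w w_in le_ew] := up_X e e_in.
    by apply: (lin w) => //; apply: prod_le_trans le_ew.
move=> p; split=> [[p_in p_max] | /leaves [p_in p_max]].
  apply/leaves; have p_X : p \in X.
    case/setU1P: p_in => [eq_pz|//].
    by rewrite -(p_max y) ?setU1r // eq_pz.
  by split=> // q q_in; apply: p_max; rewrite setU1r.
split=> [|q /setU1P [->|]]; [exact: setU1r | move=> le_pz | exact: p_max].
have eq_yp := p_max y y_in (prod_le_trans le_pz le_zy).
by apply: prod_le_anti; rewrite // -eq_yp.
Qed.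

End PreShuffle.

Section ShuffleSubset.

Variables (S T : tree) (X : {set tedge S * tedge T}).
Hypothesis X_sub : shuffle_subset X.
Implicit Types p q u x y z d e c : tedge S * tedge T.

Let X_pre : shuffle_pre X := proj1 X_sub.

Lemma incomparable_witness z y : y \in X -> prod_le z y -> z \notin X ->
  exists d e, [/\ d \in X, e \in X, prod_le z e, prod_le d e &
                  ~~ prod_le d z && ~~ prod_le z d].
Proof.
move=> y_in le_zy z_notin.
have [/existsP [d /existsP [e /and5P [? ? ? ? ?]]] | no_witness] :=
  boolP [exists d, exists e, [&& d \in X, e \in X, prod_le z e, prod_le d e &
                                 ~~ prod_le d z && ~~ prod_le z d]].
  by exists d, e.
have zX_pre : shuffle_pre (z |: X).
  apply: (pre_setU1 X_pre y_in le_zy) => d e d_in e_in le_ze le_de.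
  apply: contraNT no_witness; rewrite negb_or => incmp.
  by apply/existsP; exists d; apply/existsP; exists e; rewrite d_in e_in le_ze le_de.
by rewrite -(proj2 X_sub _ (subsetUr _ _) zX_pre) setU11 in z_notin.
Qed.

Lemma root_pair_in s t : is_root s -> is_root t -> (s, t) \in X.
Proof.
move=> s_root t_root; have z_min p : prod_le (s, t) p by rewrite /prod_le s_root t_root.
have [ls ls_leaf _] := leaf_above s; have [lt lt_leaf _] := leaf_above t.
apply: contraT => /(incomparable_witness (leaf_pair_in X_pre ls_leaf lt_leaf) (z_min _)).
by case=> d [e [_ _ _ _]]; rewrite z_min andbF.
Qed.

(* The pair [(s, x.2)] is missing from [X]; the pair witnessing that it
   cannot be added is moved in the second coordinate only. *)
Lemma missing_left_step x c s : x \in X -> imm_above_in X x c ->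
  imm_above x.1 s -> tle s c.1 -> (s, x.2) != c ->
  exists2 d, d \in X & [/\ d.1 = x.1, tle x.2 d.2 & d.2 != x.2].
Proof.
move=> x_in [c_in _ /andP [_ le_xc2] c_min] [neq_sx le_xs s_min] le_sc neq_zc.
have le_xz : prod_le x (s, x.2) by rewrite /prod_le le_xs tle_refl.
have le_zc : prod_le (s, x.2) c by rewrite /prod_le le_sc le_xc2.
have z_notin : (s, x.2) \notin X.
  apply/negP => /c_min/(_ le_xz le_zc) [eq_zx | eq_zc].
    by rewrite -eq_zx /= eqxx in neq_sx.
  by rewrite eq_zc eqxx in neq_zc.
have [d [e [d_in e_in le_ze le_de /andP [nle_dz nle_zd]]]] :=
  incomparable_witness c_in le_zc z_notin.
have /andP [le_xd1 le_xd2] : prod_le x d.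
  case/orP: (pre_comparable X_pre x_in d_in (prod_le_trans le_xz le_ze) le_de) => // le_dx.
  by rewrite (prod_le_trans le_dx le_xz) in nle_dz.
have [/andP [le_de1 _] /andP [le_ze1 _]] := (le_de, le_ze).
have le_d1s : tle d.1 s.
  case/orP: (tle_total_below le_de1 le_ze1) => // le_sd1.
  by rewrite /prod_le le_sd1 le_xd2 in nle_zd.
have eq_d1 : d.1 = x.1.
  case: (s_min _ le_xd1 le_d1s) => // eq_d1s.
  by rewrite /prod_le /= eq_d1s tle_refl le_xd2 in nle_zd.
exists d => //; split=> //; apply: contraNneq nle_dz => eq_d2.
by rewrite [d]surjective_pairing eq_d1 eq_d2 -surjective_pairing.
Qed.

Lemma missing_right_step x c t : x \in X -> imm_above_in X x c ->
  imm_above x.2 t -> tle t c.2 -> (x.1, t) != c ->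
  exists2 d, d \in X & [/\ d.2 = x.2, tle x.1 d.1 & d.1 != x.1].
Proof.
move=> x_in [c_in _ /andP [le_xc1 _] c_min] [neq_tx le_xt t_min] le_tc neq_zc.
have le_xz : prod_le x (x.1, t) by rewrite /prod_le le_xt tle_refl.
have le_zc : prod_le (x.1, t) c by rewrite /prod_le le_tc le_xc1.
have z_notin : (x.1, t) \notin X.
  apply/negP => /c_min/(_ le_xz le_zc) [eq_zx | eq_zc].
    by rewrite -eq_zx /= eqxx in neq_tx.
  by rewrite eq_zc eqxx in neq_zc.
have [d [e [d_in e_in le_ze le_de /andP [nle_dz nle_zd]]]] :=
  incomparable_witness c_in le_zc z_notin.
have /andP [le_xd1 le_xd2] : prod_le x d.
  case/orP: (pre_comparable X_pre x_in d_in (prod_le_trans le_xz le_ze) le_de) => // le_dx.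
  by rewrite (prod_le_trans le_dx le_xz) in nle_dz.
have [/andP [_ le_de2] /andP [_ le_ze2]] := (le_de, le_ze).
have le_d2t : tle d.2 t.
  case/orP: (tle_total_below le_de2 le_ze2) => // le_td2.
  by rewrite /prod_le le_td2 le_xd1 in nle_zd.
have eq_d2 : d.2 = x.2.
  case: (t_min _ le_xd2 le_d2t) => // eq_d2t.
  by rewrite /prod_le /= eq_d2t tle_refl le_xd1 in nle_zd.
exists d => //; split=> //; apply: contraNneq nle_dz => eq_d1.
by rewrite [d]surjective_pairing eq_d1 eq_d2 -surjective_pairing.
Qed.

Lemma imm_above_in_step x c : x \in X -> imm_above_in X x c ->
  left_step x c \/ right_step x c.
Proof.
move=> x_in xc; have [c_in neq_cx /andP [le1 le2] _] := xc.
have [eq1|neq1] := eqVneq c.1 x.1; have [eq2|neq2] := eqVneq c.2 x.2.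
- by case/eqP: neq_cx; rewrite [c]surjective_pairing eq1 eq2 -surjective_pairing.
- right; split=> //; have [t xt le_tc] := imm_above_exists le2 neq2.
  have [<-//|neq_tc] := eqVneq t c.2.
  have [|d d_in [eq_d2 le_d1 neq_d1]] := missing_right_step x_in xc xt le_tc.
    by apply: contra neq_tc => /eqP <-.
  by case: (pre_axis_moves X_pre d_in c_in eq_d2 eq1 le_d1 le2) => /eqP;
    rewrite ?(negbTE neq_d1) ?(negbTE neq2).
- left; split=> //; have [s xs le_sc] := imm_above_exists le1 neq1.
  have [<-//|neq_sc] := eqVneq s c.1.
  have [|d d_in [eq_d1 le_d2 neq_d2]] := missing_left_step x_in xc xs le_sc.
    by apply: contra neq_sc => /eqP <-.
  by case: (pre_axis_moves X_pre c_in d_in eq2 eq_d1 le1 le_d2) => /eqP;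
    rewrite ?(negbTE neq1) ?(negbTE neq_d2).
- exfalso; have [s xs le_sc] := imm_above_exists le1 neq1.
  have [t xt le_tc] := imm_above_exists le2 neq2.
  have [|d d_in [eq_d1 le_d2 neq_d2]] := missing_left_step x_in xc xs le_sc.
    by apply: contra neq2 => /eqP <-.
  have [|d' d'_in [eq_d'2 le_d'1 neq_d'1]] := missing_right_step x_in xc xt le_tc.
    by apply: contra neq1 => /eqP <-.
  by case: (pre_axis_moves X_pre d'_in d_in eq_d'2 eq_d1 le_d'1 le_d2) => /eqP;
    rewrite ?(negbTE neq_d'1) ?(negbTE neq_d2).
Qed.

Lemma left_step_children x c0 : x \in X -> imm_above_in X x c0 -> left_step x c0 ->
  (forall c, imm_above_in X x c -> left_step x c) /\
  (forall s, imm_above x.1 s -> imm_above_in X x (s, x.2)).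
Proof.
move=> x_in [c0_in _ _ _] [eq0 [neq0 le0 _]].
have all_left c : imm_above_in X x c -> left_step x c.
  move=> xc; case: (imm_above_in_step x_in xc) => // [[eq1 [neq2 le2 _]]].
  have [c_in _ _ _] := xc.
  by case: (pre_axis_moves X_pre c0_in c_in eq0 eq1 le0 le2) => /eqP;
    rewrite ?(negbTE neq0) ?(negbTE neq2).
split=> // s xs; have [neq_sx le_xs _] := xs.
have [ls ls_leaf le_s] := leaf_above s; have [lt lt_leaf le_t] := leaf_above x.2.
have le_x : prod_le x (ls, lt) by rewrite /prod_le le_t (tle_trans le_xs le_s).
have neq_x : (ls, lt) != x.
  apply: contra neq_sx => /eqP eq_x; apply/eqP/tle_anti => //.
  by rewrite -eq_x.
have [c xc /andP [le_c1 _]] :=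
  imm_above_in_exists (leaf_pair_in X_pre ls_leaf lt_leaf) le_x neq_x.
have [eq_c2 xc1] := all_left c xc.
by rewrite -(imm_above_eq xc1 xs le_c1 le_s) -eq_c2 -surjective_pairing.
Qed.

Lemma right_step_children x c0 : x \in X -> imm_above_in X x c0 -> right_step x c0 ->
  (forall c, imm_above_in X x c -> right_step x c) /\
  (forall t, imm_above x.2 t -> imm_above_in X x (x.1, t)).
Proof.
move=> x_in [c0_in _ _ _] [eq0 [neq0 le0 _]].
have all_right c : imm_above_in X x c -> right_step x c.
  move=> xc; case: (imm_above_in_step x_in xc) => // [[eq2 [neq1 le1 _]]].
  have [c_in _ _ _] := xc.
  by case: (pre_axis_moves X_pre c_in c0_in eq2 eq0 le1 le0) => /eqP;
    rewrite ?(negbTE neq1) ?(negbTE neq0).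
split=> // t xt; have [neq_tx le_xt _] := xt.
have [ls ls_leaf le_s] := leaf_above x.1; have [lt lt_leaf le_t] := leaf_above t.
have le_x : prod_le x (ls, lt) by rewrite /prod_le le_s (tle_trans le_xt le_t).
have neq_x : (ls, lt) != x.
  apply: contra neq_tx => /eqP eq_x; apply/eqP/tle_anti => //.
  by rewrite -eq_x.
have [c xc /andP [_ le_c2]] :=
  imm_above_in_exists (leaf_pair_in X_pre ls_leaf lt_leaf) le_x neq_x.
have [eq_c1 xc2] := all_right c xc.
by rewrite -(imm_above_eq xc2 xt le_c2 le_t) -eq_c1 -surjective_pairing.
Qed.

End ShuffleSubset.

Section ShufflesAndSubsets.

Variables S T : tree.

Lemma label_set_shuffle_subset (A : tree) (l : tedge A -> tedge S * tedge T) :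
  is_shuffle l -> shuffle_subset (label_set l).
Proof.
move=> l_shuffle; have l_mono := shuffle_leE l_shuffle.
have [l_root l_leaf _ leaf_label _] := l_shuffle.
have X_pre : shuffle_pre (label_set l).
  split=> [|p]; first exact: label_set_treelike.
  split=> [p_max | [s_leaf t_leaf]].
    have [/imsetP [a _ eq_p] _] := p_max; rewrite eq_p in p_max *.
    by apply: l_leaf; apply/(maximal_label_set l_mono).
  have [a a_leaf eq_a] := leaf_label _ _ s_leaf t_leaf.
  by rewrite [p]surjective_pairing -eq_a; apply/(maximal_label_set l_mono).
split=> // Y sub_XY Y_pre; apply/eqP; rewrite eqEsubset sub_XY andbT.
(* Climb from the root towards the leaf [b] above [y] while labels stay below
   [y]; the next label is comparable with [y], both lying below [l b]. *)
apply/subsetP => y y_in; have [[_ _ _ _ Y_lin] Y_leaves] := Y_pre.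
have [q [q_in le_yq q_max]] := ex_max (prod_porder S T) (P := mem Y) y_in.
have /Y_leaves [q1_leaf q2_leaf] : maximal_in Y (@prod_le S T) q by [].
have /imsetP [b _ eq_q] := leaf_pair_in X_pre q1_leaf q2_leaf.
rewrite -surjective_pairing in eq_q.
have [r r_root] := tree_root A; have [rs rt] := l_root r r_root.
pose P := [pred a | tle a b && prod_le (l a) y].
have [|m [/andP [le_mb le_my] _ m_max]] := ex_max (tree_porder A) (_ : P r).
  by rewrite /= r_root /prod_le rs rt.
have [eq_bm|neq_bm] := eqVneq b m.
  suff -> : y = l b by exact: imset_f.
  by apply: prod_le_anti; [rewrite -eq_q | rewrite eq_bm].
have [c mc le_cb] := imm_above_exists le_mb neq_bm.
have lc_in : l c \in Y by apply: (subsetP sub_XY); exact: imset_f.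
have le_cq : prod_le (l c) q by rewrite eq_q -l_mono.
case/orP: (Y_lin _ _ _ q_in lc_in y_in le_cq le_yq) => [le_cy | le_yc].
  have [neq_cm le_mc _] := mc; case/eqP: neq_cm.
  by apply: m_max; rewrite //= le_cb le_cy.
by case: (step_between (shuffle_child_step l_shuffle mc) le_my le_yc) => ->;
  exact: imset_f.
Qed.

Lemma shuffle_subset_shuffle (A : tree) (l : tedge A -> tedge S * tedge T) :
  (forall a a', tle a a' = prod_le (l a) (l a')) ->
  shuffle_subset (label_set l) -> is_shuffle l.
Proof.
move=> l_mono X_sub; have X_pre := proj1 X_sub; have [_ leaves] := X_pre.
have l_inj := label_inj l_mono.
split=> [a a_root | a /(maximal_label_set l_mono)/leaves // | a b _ _
        | s t s_leaf t_leaf | a a_nleaf].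
- have [rs rs_root] := tree_root S; have [rt rt_root] := tree_root T.
  have /imsetP [b _ eq_b] := root_pair_in X_sub rs_root rt_root.
  have /andP [le1 le2] : prod_le (l a) (rs, rt) by rewrite eq_b -l_mono.
  by split=> u; [apply: tle_trans le1 _ | apply: tle_trans le2 _].
- exact: l_inj.
- have /imsetP [a _ eq_a] := leaf_pair_in X_pre s_leaf t_leaf.
  exists a => //; apply/(maximal_label_set l_mono); rewrite -eq_a.
  exact/leaves.
split=> [c1 c2 _ _ /l_inj //|].
have lift p : imm_above_in (label_set l) (l a) p -> exists2 c, imm_above a c & l c = p.
  move=> lap; have [/imsetP [c _ eq_c] _ _ _] := lap.
  by exists c => //; apply/(imm_above_label_set l_mono); rewrite -eq_c.
have [c0 /(imm_above_label_set l_mono) ac0] := not_leaf_imm_above a_nleaf.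
have la_in : l a \in label_set l by exact: imset_f.
case: (imm_above_in_step X_sub la_in ac0) => [step | step]; [left | right].
- have [all_left cover] := left_step_children X_sub la_in ac0 step.
  split=> [c /(imm_above_label_set l_mono)/all_left // | s /cover/lift //].
- have [all_right cover] := right_step_children X_sub la_in ac0 step.
  split=> [c /(imm_above_label_set l_mono)/all_right // | t /cover/lift //].
Qed.

Lemma shuffle_subset_label_set (X : {set tedge S * tedge T}) : shuffle_subset X ->
  exists (A : tree) (l : tedge A -> tedge S * tedge T), is_shuffle l /\ label_set l = X.
Proof.
move=> X_sub; have [[[_ _ _ [r r_in r_min] X_lin] _] _] := X_sub.
pose le : rel {p | p \in X} := fun a b => prod_le (val a) (val b).
have le_treelike : treelike le.
  split=> [a _|a b _ _ le_ab le_ba|a b c _ _ _||].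
  - exact: prod_le_refl.
  - exact/val_inj/prod_le_anti.
  - exact: prod_le_trans.
  - by exists (exist _ r r_in) => // a _; apply/r_min/valP.
  - by move=> e d1 d2 _ _ _; apply: X_lin; apply: valP.
have label_val : label_set (val : tedge (Tree le_treelike) -> _) = X.
  apply/setP => p; apply/imsetP/idP => [[a _ ->] | p_in]; first exact: valP.
  by exists (exist _ p p_in).
exists (Tree le_treelike), val; split=> //.
by apply: shuffle_subset_shuffle; rewrite ?label_val.
Qed.

End ShufflesAndSubsets.

Theorem mainTheorem2 (S T : tree) :
  [/\ (* the label set of a shuffle lies in the target set *)
      (forall (A : tree) (l : tedge A -> tedge S * tedge T),
         is_shuffle l -> shuffle_subset (label_set l)),
      (* the map is well defined on isomorphism classes *)
      (forall (A : tree) (l : tedge A -> tedge S * tedge T)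
              (B : tree) (m : tedge B -> tedge S * tedge T),
         is_shuffle l -> is_shuffle m -> shuffle_iso l m -> label_set l = label_set m),
      (* injective on isomorphism classes *)
      (forall (A : tree) (l : tedge A -> tedge S * tedge T)
              (B : tree) (m : tedge B -> tedge S * tedge T),
         is_shuffle l -> is_shuffle m -> label_set l = label_set m -> shuffle_iso l m),
      (* surjective *)
      (forall X : {set tedge S * tedge T}, shuffle_subset X ->
         exists (A : tree) (l : tedge A -> tedge S * tedge T),
           is_shuffle l /\ label_set l = X)
    & (* tree order of a shuffle = order induced from E(S) x E(T) *)
      (forall (A : tree) (l : tedge A -> tedge S * tedge T),
         is_shuffle l -> forall a a' : tedge A, tle a a' = prod_le (l a) (l a'))].
Proof.
split.
- exact: label_set_shuffle_subset.
- by move=> A l B m _ _; apply: shuffle_iso_label_set.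
- by move=> A l B m l_shuffle m_shuffle; apply: label_set_shuffle_iso;
    apply: shuffle_leE.
- exact: shuffle_subset_label_set.
- exact: shuffle_leE.
Qed.
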